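(* For all $k\ge1$ and $n\ge0$, $\gamma_k(n)=\frac1k\,b_k(n+1)$.
   Context: Let $G=\{g_1=e,\dots,g_k\}$ be a group of order $k$. A labeled graph on $G$ with $n$ edges has vertex set $G$ and $n$ directed edges labeled $1,\dots,n$, edge $i$ being an ordered pair of vertices (loops and multiple edges allowed); there are $k^{2n}$ such graphs. The degree of a vertex is the number of edges having it as initial or terminal point, a loop counted twice. A graph is balanced if every vertex has even degree; $b_k(n)$ is the number of balanced labeled graphs on $G$ with $n$ edges. A graph has an Eulerian pseudo-path from $e$ to $g_i$ if: all vertices other than $e,g_i$ have even degree; if $g_i=e$ then $\deg e$ is even; if $g_i\ne e$ then $\deg e$ and $\deg g_i$ are odd (no connectivity required). $\gamma_k(n)$ is the number of labeled graphs on $G$ with $n$ edges having an Eulerian pseudo-path from $e$ to some vertex $g_i$, $1\le i\le k$. *)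

From mathcomp Require Import all_boot all_fingroup.
Set Implicit Arguments. Unset Strict Implicit. Unset Printing Implicit Defensive.

(* A labeled graph on the finite group gT with n edges: edge i (i : 'I_n)
   is an ordered pair (initial, terminal) of vertices.  There are k^(2n). *)
Definition lgraph (gT : finGroupType) (n : nat) := {ffun 'I_n -> gT * gT}.

(* degree: number of edges having v as initial or terminal point,
   loops counted twice *)
Definition deg (gT : finGroupType) (n : nat) (G : lgraph gT n) (v : gT) : nat :=
  \sum_(i < n) (((G i).1 == v) + ((G i).2 == v)).

Definition balanced (gT : finGroupType) (n : nat) (G : lgraph gT n) : bool :=
  [forall v, ~~ odd (deg G v)].

(* Eulerian pseudo-path from the identity 1 to g (no connectivity). *)
Definition eul_pseudo_path (gT : finGroupType) (n : nat) (G : lgraph gT n) (g : gT) : bool :=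
  [forall v, (v != 1%g) && (v != g) ==> ~~ odd (deg G v)] &&
  (if g == 1%g then ~~ odd (deg G 1%g) else odd (deg G 1%g) && odd (deg G g)).

Definition bcount (gT : finGroupType) (n : nat) : nat :=
  #|[set G : lgraph gT n | balanced G]|.

Definition gammacount (gT : finGroupType) (n : nat) : nat :=
  #|[set G : lgraph gT n | [exists g : gT, eul_pseudo_path G g]]|.

From mathcomp Require Import all_boot all_fingroup.
Set Implicit Arguments. Unset Strict Implicit. Unset Printing Implicit Defensive.

(* Removing the first edge (1, g) from a balanced graph with n+1 edges leaves
   exactly a graph with an Eulerian pseudo-path from 1 to g, and g is
   determined by that graph (it is the odd-degree vertex other than 1, or 1).
   So gamma_k(n) counts the balanced graphs whose first edge starts at 1.
   Left translation by a preserves balance and moves that start to a, so the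
   balanced graphs split into k classes of size gamma_k(n). *)

Section LabeledGraphs.
Variable gT : finGroupType.
Local Open Scope group_scope.

Definition lgraph_behead n (G : lgraph gT n.+1) : lgraph gT n :=
  [ffun j => G (lift ord0 j)].

Definition lgraph_cons n (e : gT * gT) (G : lgraph gT n) : lgraph gT n.+1 :=
  [ffun i => if unlift ord0 i is Some j then G j else e].

Definition lgraph_translate n (a : gT) (G : lgraph gT n) : lgraph gT n :=
  [ffun i => (a * (G i).1, a * (G i).2)].

Lemma lgraph_cons0 n e (G : lgraph gT n) : lgraph_cons e G ord0 = e.
Proof. by rewrite ffunE unlift_none. Qed.

Lemma lgraph_consK n e : cancel (@lgraph_cons n e) (@lgraph_behead n).
Proof. by move=> G; apply/ffunP => j; rewrite !ffunE liftK. Qed.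

Lemma lgraph_beheadK n (G : lgraph gT n.+1) : lgraph_cons (G ord0) (lgraph_behead G) = G.
Proof.
by apply/ffunP => i; rewrite ffunE; case: (unliftP ord0 i) => [j ->|->]; rewrite ?ffunE.
Qed.

Lemma deg_behead n (G : lgraph gT n.+1) v :
  deg G v = ((G ord0).1 == v) + ((G ord0).2 == v) + deg (lgraph_behead G) v.
Proof.
rewrite /deg big_ord_recl; congr (_ + _).
by apply: eq_bigr => j _; rewrite ffunE.
Qed.

Lemma balanced_beheadE n (G : lgraph gT n.+1) :
  balanced G =
  [forall v, odd (deg (lgraph_behead G) v) == ((G ord0).1 == v) (+) ((G ord0).2 == v)].
Proof.
apply: eq_forallb => v; rewrite deg_behead !oddD !oddb.
by case: odd; case: (_ == v); case: (_ == v).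
Qed.

Lemma eul_pseudo_pathE n (G : lgraph gT n) g :
  eul_pseudo_path G g = [forall v, odd (deg G v) == (1 == v) (+) (g == v)].
Proof.
apply/andP/forallP => [[/forallP even_deg] | odd_deg].
  have even_off v : 1 != v -> g != v -> ~~ odd (deg G v).
    by move=> v1 vg; apply: (implyP (even_deg v)); rewrite eq_sym v1 eq_sym vg.
  case: (eqVneq g 1) even_off => [-> even_off even1 | g1 even_off /andP[odd1 oddg]] v.
    rewrite addbb; have [<-|v1] := eqVneq 1 v; first by rewrite (negbTE even1).
    by rewrite (negbTE (even_off v v1 v1)).
  have [<-|v1] := eqVneq 1 v; first by rewrite odd1 eq_sym (negbTE g1).
  have [<-|gv] := eqVneq g v; first by rewrite oddg.
  by rewrite (negbTE (even_off v v1 gv)).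
split.
  apply/forallP => v; apply/implyP => /andP[v1 vg].
  by have /eqP -> := odd_deg v; rewrite eq_sym (negbTE v1) eq_sym (negbTE vg).
case: (eqVneq g 1) odd_deg => [-> | g1] odd_deg; first by rewrite (eqP (odd_deg 1)) addbb.
by rewrite (eqP (odd_deg 1)) (eqP (odd_deg g)) !eqxx (negbTE g1) eq_sym (negbTE g1).
Qed.

Lemma eul_pseudo_path_uniq n (G : lgraph gT n) g h :
  eul_pseudo_path G g -> eul_pseudo_path G h -> g = h.
Proof.
rewrite !eul_pseudo_pathE => /forallP/(_ g)/eqP oddg /forallP/(_ g)/eqP.
by rewrite oddg eqxx => /addbI/esym/eqP.
Qed.

Lemma balanced_head1E n (G : lgraph gT n.+1) :
  (G ord0).1 = 1 -> balanced G = eul_pseudo_path (lgraph_behead G) (G ord0).2.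
Proof. by move=> G01; rewrite balanced_beheadE eul_pseudo_pathE G01. Qed.

Lemma gammacountE n :
  gammacount gT n = #|[set G : lgraph gT n.+1 | balanced G & (G ord0).1 == 1]|.
Proof.
rewrite /gammacount -(card_in_imset (f := @lgraph_behead n)).
  apply: eq_card => G; rewrite inE; apply/existsP/imsetP => [[g path_g]|[G']].
    exists (lgraph_cons (1, g) G); last by rewrite lgraph_consK.
    by rewrite inE balanced_head1E lgraph_cons0 // lgraph_consK path_g eqxx.
  by rewrite inE => /andP[bal_G' /eqP G'01] ->; exists (G' ord0).2; rewrite -balanced_head1E.
move=> G1 G2; rewrite !inE => /andP[bal1 /eqP G101] /andP[bal2 /eqP G201] eq_behead.
rewrite -[G1]lgraph_beheadK -[G2]lgraph_beheadK eq_behead; congr lgraph_cons.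
rewrite [G1 ord0]surjective_pairing [G2 ord0]surjective_pairing G101 G201; congr (_, _).
rewrite balanced_head1E // eq_behead in bal1.
by apply: eul_pseudo_path_uniq bal1 _; rewrite -balanced_head1E.
Qed.

Lemma lgraph_translateK n a : cancel (@lgraph_translate n a) (lgraph_translate a^-1).
Proof. by move=> G; apply/ffunP => i; rewrite !ffunE /= !mulKg; case: (G i). Qed.

Lemma deg_translate n a (G : lgraph gT n) v : deg (lgraph_translate a G) (a * v) = deg G v.
Proof. by apply: eq_bigr => i _; rewrite ffunE /= !(inj_eq (mulgI a)). Qed.

Lemma balanced_translate n a (G : lgraph gT n) :
  balanced (lgraph_translate a G) = balanced G.
Proof.
apply/forallP/forallP => even_deg v; last by rewrite -(mulKVg a v) deg_translate.
by rewrite -(deg_translate a).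
Qed.

Lemma card_balanced_head n a :
  #|[set G : lgraph gT n.+1 | balanced G & (G ord0).1 == a]| =
  #|[set G : lgraph gT n.+1 | balanced G & (G ord0).1 == 1]|.
Proof.
rewrite -[in RHS](card_imset _ (can_inj (@lgraph_translateK n.+1 a))).
apply: eq_card => G; rewrite !inE; apply/andP/imsetP => [[bal_G /eqP G0a]|[G' + ->]].
  exists (lgraph_translate a^-1 G); last by rewrite -[LHS](lgraph_translateK a^-1) invgK.
  by rewrite inE balanced_translate bal_G ffunE /= G0a mulVg.
by rewrite inE balanced_translate ffunE /= => /andP[-> /eqP ->]; rewrite mulg1.
Qed.

End LabeledGraphs.

Theorem mainTheorem12 (gT : finGroupType) (n : nat) :
  #|gT| * gammacount gT n = bcount gT n.+1.
Proof.
rewrite /bcount -sum1_card (partition_big (fun G : lgraph gT n.+1 => (G ord0).1) predT) //=.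
rewrite -sum_nat_const; apply: eq_bigr => a _.
by rewrite sum1dep_card gammacountE -(card_balanced_head _ a); apply: eq_card => G; rewrite !inE.
Qed.
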